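(* Let $m\ge 2$ be an integer, let $B\subseteq m\mathbb Z$ be finite, and let $F\subseteq\mathbb Z$ be a finite nonempty set whose elements all lie in a single congruence class modulo $m$ different from $0\bmod m$. If there exists $W\subseteq\mathbb Z$ with $m\mathbb Z_-\setminus B=F+W$, then $C=m\mathbb N\cup B\cup F$ arises as a minimal additive complement in $\mathbb Z$.
   Context: $\mathbb N=\{0,1,2,\dots\}$, $m\mathbb N=\{mk:k\in\mathbb N\}$, and $m\mathbb Z_-=\{mk:k\in\mathbb Z,\ k<0\}$. For $C,W\subseteq\mathbb Z$, $C+W=\{c+w:c\in C,w\in W\}$. $C$ is a minimal additive complement (MAC) to $W$ if $C+W=\mathbb Z$ and no proper subset $C'\subsetneq C$ satisfies $C'+W=\mathbb Z$. $C$ arises as a MAC if there exists $W\subseteq\mathbb Z$ to which $C$ is a MAC. *)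

From Stdlib Require Import ZArith List.
Open Scope Z_scope.

Definition finite_set (A : Z -> Prop) : Prop :=
  exists l : list Z, forall x, A x <-> In x l.

Definition sumset (C W : Z -> Prop) : Z -> Prop :=
  fun z => exists c w, C c /\ W w /\ z = c + w.

Definition mult_nonneg (m : Z) : Z -> Prop :=
  fun z => exists k, 0 <= k /\ z = m * k.

Definition mult_neg (m : Z) : Z -> Prop :=
  fun z => exists k, k < 0 /\ z = m * k.

Definition is_complement (C W : Z -> Prop) : Prop :=
  forall z, sumset C W z.

Definition is_MAC (C W : Z -> Prop) : Prop :=
  is_complement C W /\
  forall C' : Z -> Prop,
    (forall x, C' x -> C x) -> (exists x, C x /\ ~ C' x) ->
    ~ is_complement C' W.

Definition arises_as_MAC (C : Z -> Prop) : Prop :=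
  exists W, is_MAC C W.

From Stdlib Require Import ZArith List Lia Classical.
Open Scope Z_scope.

(* Let f = min F. The complement built for C is
     W' = {0} ∪ V ∪ (Z \ (mZ ∪ (-f + mZ))),
   where V consists of shifts y with F + y ⊆ mZ_- \ B; such shifts lie in
   -f + mZ, so 0 is the only element of W' in mZ, and every c in mN ∪ B is
   the sole summand from C of c = c + 0 in C + W'.  To make the elements of F
   indispensable as well, every h in F gets a far negative witness z_h in mZ,
   and the shifts z_h - g (g in F, g <> h) are removed from V.  Witnesses are
   spaced 2 (max F - min F) + 1 apart, so that F + V is still mZ_- \ B: if
   both z - max F and z - min F were removed, z would be some witness z_h,
   and z_h - h was not removed. *)

Definition sole_summand (C W : Z -> Prop) (c z : Z) : Prop :=
  forall c' w, C c' -> W w -> z = c' + w -> c' = c.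

Lemma is_MAC_of_sole_summands (C W : Z -> Prop) :
  is_complement C W ->
  (forall c, C c -> exists z, sole_summand C W c z) ->
  is_MAC C W.
Proof.
  intros HCW Hsole; split; [exact HCW|].
  intros C' HC'C [c [Hc Hc']] HC'W.
  destruct (Hsole c Hc) as [z Hz].
  destruct (HC'W z) as [c' [w [Hc'' [Hw E]]]].
  apply Hc'; rewrite <- (Hz c' w (HC'C c' Hc'') Hw E); exact Hc''.
Qed.

Lemma finite_lower_bound (A : Z -> Prop) :
  finite_set A -> exists lo, forall x, A x -> lo <= x.
Proof.
  intros [l Hl].
  assert (Hlo : exists lo, forall x, In x l -> lo <= x).
  { clear Hl; induction l as [|a l [lo IH]].
    - exists 0; intros x [].
    - exists (Z.min a lo); intros x [<-|Hx]; [lia|specialize (IH x Hx); lia]. }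
  destruct Hlo as [lo Hlo]; exists lo; intros x Hx; apply Hlo, Hl, Hx.
Qed.

Lemma finite_extrema (A : Z -> Prop) :
  finite_set A -> (exists a, A a) ->
  exists lo hi, A lo /\ A hi /\ forall x, A x -> lo <= x <= hi.
Proof.
  intros [l Hl] [a Ha]; apply Hl in Ha.
  assert (Hext : forall b l, exists lo hi, In lo (b :: l) /\ In hi (b :: l) /\
                   forall x, In x (b :: l) -> lo <= x <= hi).
  { clear; intros b l; revert b; induction l as [|c l IH]; intros b.
    - exists b, b; split; [now left|split; [now left|]].
      intros x [<-|[]]; lia.
    - destruct (IH c) as [lo [hi [Hlo [Hhi Hbnd]]]].
      exists (Z.min b lo), (Z.max b hi).
      split; [destruct (Z.min_spec b lo) as [[_ ->]|[_ ->]]; [now left|now right]|].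
      split; [destruct (Z.max_spec b hi) as [[_ ->]|[_ ->]]; [now right|now left]|].
      intros x [<-|Hx]; [lia|specialize (Hbnd x Hx); lia]. }
  destruct l as [|b l]; [destruct Ha|].
  destruct (Hext b l) as [lo [hi [Hlo [Hhi Hbnd]]]].
  exists lo, hi; split; [now apply Hl|split; [now apply Hl|]].
  intros x Hx; apply Hbnd, Hl, Hx.
Qed.

Lemma exists_mult_below (m z t : Z) :
  0 < m -> exists k, 0 <= k /\ z - m * k < t.
Proof.
  intros Hm; exists (Z.abs z + Z.abs t + 1); split; nia.
Qed.

Lemma mult_nonneg_neg_disjoint (m z : Z) :
  0 < m -> mult_nonneg m z -> mult_neg m z -> False.
Proof. intros Hm [a [Ha ->]] [b [Hb E]]; nia. Qed.

Lemma mult_neg_divide (m z : Z) : mult_neg m z -> (m | z).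
Proof. intros [k [_ ->]]; exists k; ring. Qed.

Lemma mult_neg_of_divide (m z : Z) : 0 < m -> (m | z) -> z < 0 -> mult_neg m z.
Proof. intros Hm [k ->] Hz; exists k; split; [nia|ring]. Qed.

Section Construction.

Variable m : Z.
Hypothesis m_pos : 0 < m.

Variables B F W : Z -> Prop.

Variable b0 : Z.
Hypothesis B_mult : forall b, B b -> (m | b).
Hypothesis B_ge : forall b, B b -> b0 <= b.

Variables fmin fmax : Z.
Hypothesis F_fmin : F fmin.
Hypothesis F_fmax : F fmax.
Hypothesis F_range : forall f, F f -> fmin <= f <= fmax.
Hypothesis F_class : forall f, F f -> (m | f - fmin).
Hypothesis fmin_nondiv : ~ (m | fmin).

Hypothesis FW : forall z, (mult_neg m z /\ ~ B z) <-> sumset F W z.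

Variable A : Z.
Hypothesis A_mult : (m | A).
Hypothesis A_low : A + 2 * (fmax - fmin) < Z.min 0 b0.

Definition candidate (z : Z) : Prop := mult_nonneg m z \/ B z \/ F z.

Definition witness (h : Z) : Z := A + (2 * (fmax - fmin) + 1) * (h - fmax).

Definition blocked (y : Z) : Prop :=
  exists h g, F h /\ F g /\ h <> g /\ y = witness h - g.

Definition safe_shift (y : Z) : Prop :=
  forall f, F f -> mult_neg m (f + y) /\ ~ B (f + y).

Definition good_shift (y : Z) : Prop := safe_shift y /\ ~ blocked y.

Definition partner (x : Z) : Prop :=
  x = 0 \/ good_shift x \/ (~ (m | x) /\ ~ (m | x + fmin)).

Lemma F_width : 0 <= fmax - fmin.
Proof. specialize (F_range fmin F_fmin); lia. Qed.

Lemma witness_mult h : F h -> (m | witness h).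
Proof.
  intros Hh; unfold witness.
  apply Z.divide_add_r; [exact A_mult|]; apply Z.divide_mul_r.
  replace (h - fmax) with ((h - fmin) - (fmax - fmin)) by ring.
  apply Z.divide_sub_r; auto.
Qed.

Lemma witness_range h :
  F h -> A - (2 * (fmax - fmin) + 1) * (fmax - fmin) <= witness h <= A.
Proof. intros Hh; pose proof (F_range h Hh); pose proof F_width; unfold witness; nia. Qed.

Lemma witness_spread h h' :
  Z.abs (witness h - witness h') <= 2 * (fmax - fmin) -> h = h'.
Proof.
  unfold witness; intros Hd; pose proof F_width.
  destruct (Z.lt_total h h') as [Hlt|[Heq|Hgt]]; [exfalso|exact Heq|exfalso]; nia.
Qed.

Lemma blocked_range y :
  blocked y -> A - (2 * (fmax - fmin) + 1) * (fmax - fmin) - fmax <= y <= A - fmin.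
Proof.
  intros [h [g [Hh [Hg [_ ->]]]]].
  pose proof (witness_range h Hh); pose proof (F_range g Hg); lia.
Qed.

Lemma witness_not_blocked h : F h -> ~ blocked (witness h - h).
Proof.
  intros Hh [h' [g [Hh' [Hg [Hne E]]]]].
  pose proof (F_range h Hh); pose proof (F_range g Hg).
  assert (h' = h) by (apply witness_spread; lia); subst h'.
  apply Hne; lia.
Qed.

Lemma exists_unblocked z : exists f, F f /\ ~ blocked (z - f).
Proof.
  destruct (classic (blocked (z - fmax))) as [[h [g [Hh [Hg [_ Eh]]]]]|Hmax];
    [|now exists fmax].
  destruct (classic (blocked (z - fmin))) as [[h' [g' [Hh' [Hg' [_ Eh']]]]]|Hmin];
    [|now exists fmin].
  pose proof (F_range g Hg); pose proof (F_range g' Hg').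
  assert (h' = h) by (apply witness_spread; lia); subst h'.
  assert (z = witness h) by lia; subst z.
  exists h; split; [exact Hh|]; now apply witness_not_blocked.
Qed.

Lemma safe_shift_low y : (m | y + fmin) -> y + fmax < Z.min 0 b0 -> safe_shift y.
Proof.
  intros Hy Hlow f Hf; pose proof (F_range f Hf); split.
  - apply mult_neg_of_divide; [exact m_pos| |lia].
    replace (f + y) with ((f - fmin) + (y + fmin)) by ring.
    apply Z.divide_add_r; auto.
  - intros HB; specialize (B_ge _ HB); lia.
Qed.

Lemma safe_shift_class y : safe_shift y -> (m | y + fmin).
Proof.
  intros Hy; rewrite Z.add_comm; exact (mult_neg_divide m _ (proj1 (Hy fmin F_fmin))).
Qed.

Lemma W_safe w : W w -> safe_shift w.
Proof. intros Hw f Hf; apply FW; now exists f, w. Qed.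

Lemma cover_mult_neg z :
  mult_neg m z -> ~ B z -> exists f y, F f /\ good_shift y /\ z = f + y.
Proof.
  intros Hz HBz.
  destruct (proj1 (FW z) (conj Hz HBz)) as [f [w [Hf [Hw E]]]].
  destruct (classic (blocked w)) as [Hbl|Hbl];
    [|exists f, w; split; [exact Hf|split; [split; [now apply W_safe|exact Hbl]|exact E]]].
  (* a blocked W-summand forces z so low that every shift z - f' is safe *)
  destruct (exists_unblocked z) as [f' [Hf' Hnbl]].
  exists f', (z - f'); split; [exact Hf'|split; [split; [|exact Hnbl]|ring]].
  pose proof (blocked_range w Hbl); pose proof (F_range f Hf); pose proof (F_range f' Hf').
  apply safe_shift_low; [|lia].
  replace (z - f' + fmin) with (z - (f' - fmin)) by ring.
  apply Z.divide_sub_r; auto using mult_neg_divide.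
Qed.

Lemma cover_shift_class z :
  (m | z + fmin) -> exists k y, 0 <= k /\ good_shift y /\ z = m * k + y.
Proof.
  intros Hz.
  destruct (exists_mult_below m z (A - (2 * (fmax - fmin) + 1) * (fmax - fmin) - fmax))
    as [k [Hk Hlow]]; [exact m_pos|].
  exists k, (z - m * k); split; [exact Hk|split; [split|ring]].
  - pose proof F_width; apply safe_shift_low; [|nia].
    replace (z - m * k + fmin) with ((z + fmin) - m * k) by ring.
    apply Z.divide_sub_r; [exact Hz|apply Z.divide_factor_l].
  - intros Hbl; pose proof (blocked_range _ Hbl); lia.
Qed.

Lemma partner_complement : is_complement candidate partner.
Proof.
  intros z.
  destruct (classic (m | z)) as [Hmz|Hmz].
  - destruct (Z.le_gt_cases 0 z) as [Hz|Hz].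
    + exists z, 0; split; [left|split; [now left|ring]].
      destruct Hmz as [k ->]; exists k; split; [nia|ring].
    + destruct (classic (B z)) as [HB|HB].
      * exists z, 0; split; [now right; left|split; [now left|ring]].
      * destruct (cover_mult_neg z (mult_neg_of_divide m z m_pos Hmz Hz) HB)
          as [f [y [Hf [Hy E]]]].
        exists f, y; split; [now right; right|split; [now right; left|exact E]].
  - destruct (classic (m | z + fmin)) as [Hcl|Hcl].
    + destruct (cover_shift_class z Hcl) as [k [y [Hk [Hy E]]]].
      exists (m * k), y; split; [left; now exists k|split; [now right; left|exact E]].
    + exists 0, z; split; [left; exists 0; split; [lia|ring]|split; [now right; right|ring]].
Qed.

Lemma partner_mult w : partner w -> (m | w) -> w = 0.
Proof.
  intros [Hw|[[Hw _]|[Hw _]]] Hmw; [exact Hw| |contradiction].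
  exfalso; apply fmin_nondiv.
  replace fmin with ((w + fmin) - w) by ring.
  apply Z.divide_sub_r; auto using safe_shift_class.
Qed.

Lemma partner_class w : partner w -> (m | w + fmin) -> good_shift w.
Proof.
  intros [->|[Hw|[_ Hw]]] Hcl; [|exact Hw|contradiction].
  exfalso; apply fmin_nondiv; now rewrite <- Z.add_0_l.
Qed.

Lemma candidate_cases c : candidate c -> ((m | c) /\ Z.min 0 b0 <= c) \/ F c.
Proof.
  intros [[k [Hk ->]]|[HB|HF]]; [left|left|now right].
  - split; [apply Z.divide_factor_l|nia].
  - specialize (B_ge c HB); split; [auto|lia].
Qed.

Lemma shift_class_of_F c c' : F c' -> (m | c) -> (m | c - c' + fmin).
Proof.
  intros Hc' Hc; replace (c - c' + fmin) with (c - (c' - fmin)) by ring.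
  apply Z.divide_sub_r; auto.
Qed.

Lemma sole_summand_mult_nonneg_or_B c :
  mult_nonneg m c \/ B c -> sole_summand candidate partner c c.
Proof.
  intros Hc c' w Hc' Hw E.
  assert (Hmc : (m | c)) by (destruct Hc as [[k [_ ->]]|HB]; [now exists k; ring|auto]).
  destruct (candidate_cases c' Hc') as [[Hmc' _]|HF].
  - enough (w = 0) by lia.
    apply partner_mult; [exact Hw|].
    replace w with (c - c') by lia; now apply Z.divide_sub_r.
  - exfalso.
    assert (Hgood : good_shift w).
    { apply partner_class; [exact Hw|]; replace w with (c - c') by lia.
      now apply shift_class_of_F. }
    destruct (proj1 Hgood c' HF) as [Hneg HnB]; rewrite <- E in Hneg, HnB.
    destruct Hc as [Hc|Hc]; [exact (mult_nonneg_neg_disjoint m c m_pos Hc Hneg)|auto].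
Qed.

Lemma sole_summand_F f : F f -> sole_summand candidate partner f (witness f).
Proof.
  intros Hf c' w Hc' Hw E.
  pose proof (witness_mult f Hf) as Hmz; pose proof (witness_range f Hf); pose proof F_width.
  destruct (candidate_cases c' Hc') as [[Hmc' Hlo]|HF].
  - enough (w = 0) by lia.
    apply partner_mult; [exact Hw|].
    replace w with (witness f - c') by lia; now apply Z.divide_sub_r.
  - assert (Hgood : good_shift w).
    { apply partner_class; [exact Hw|]; replace w with (witness f - c') by lia.
      now apply shift_class_of_F. }
    destruct (Z.eq_dec c' f) as [Heq|Hne]; [exact Heq|].
    exfalso; apply (proj2 Hgood); exists f, c'; repeat split; auto; lia.
Qed.

Theorem candidate_is_MAC : is_MAC candidate partner.
Proof.
  apply is_MAC_of_sole_summands; [exact partner_complement|].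
  intros c [Hc|[Hc|Hc]].
  - exists c; apply sole_summand_mult_nonneg_or_B; now left.
  - exists c; apply sole_summand_mult_nonneg_or_B; now right.
  - exists (witness c); now apply sole_summand_F.
Qed.

End Construction.

Theorem proposition3 (m : Z) (B F : Z -> Prop) :
  2 <= m ->
  finite_set B ->
  (forall b, B b -> (m | b)) ->
  finite_set F ->
  (exists f, F f) ->
  (forall f g, F f -> F g -> f mod m = g mod m) ->
  (forall f, F f -> f mod m <> 0) ->
  (exists W : Z -> Prop,
     forall z, (mult_neg m z /\ ~ B z) <-> sumset F W z) ->
  arises_as_MAC (fun z => mult_nonneg m z \/ B z \/ F z).
Proof.
  intros Hm HBfin HBmult HFfin HFne Hcong Hnz [W HW].
  destruct (finite_lower_bound B HBfin) as [b0 Hb0].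
  destruct (finite_extrema F HFfin HFne) as [fmin [fmax [Hmin [Hmax Hrange]]]].
  destruct (exists_mult_below m 0 (Z.min 0 b0 - 2 * (fmax - fmin))) as [k [_ Hk]];
    [lia|].
  eexists; apply (candidate_is_MAC m) with (W := W) (b0 := b0)
    (fmin := fmin) (fmax := fmax) (A := - (m * k)); auto; try lia.
  - intros f Hf; apply Z.mod_divide; [lia|].
    apply Z.cong_iff_0, Hcong; assumption.
  - intros Hdiv; apply (Hnz fmin Hmin), Z.mod_divide; [lia|exact Hdiv].
  - apply Z.divide_opp_r, Z.divide_factor_l.
Qed.
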